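(* Fix non-negative integers $a\leq b$ and a positive integer $r$, and let $\mu=\frac{a+b}{2r}$. For integers $-1\leq\ell\leq\lfloor(b-a)/r\rfloor$ define $\mu''_\ell=\mu-\frac{\ell+1}{2}$ and $\theta_\ell=\beta_{r,\mu''_\ell}+(\ell+1)(r+a)$. Let $0\leq\ell\leq\lfloor(b-a)/r\rfloor$ be an integer. Then $\theta_\ell<\theta_{\ell-1}$, unless either $\ell=\lfloor(b-a)/r\rfloor$, or $\ell=\lfloor(b-a)/r\rfloor-1$ and $\lfloor\mu''_{\ell-1}\rfloor=\lfloor\mu''_\ell\rfloor$.
   Context: For an integer $r\geq1$ and rational $\mu\geq-1$: $\alpha_\mu=\lfloor\mu\rfloor+1$ and $\beta_{r,\mu}=r\alpha_\mu(2\mu-\alpha_\mu+2)$. (All $\mu''_\ell$ in the stated range satisfy $\mu''_\ell\geq-1$.) *)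

From mathcomp Require Import all_boot all_order all_algebra.
Import Order.TTheory GRing.Theory Num.Theory.
Local Open Scope ring_scope.

Definition alpha (mu : rat) : int := Num.floor mu + 1.

Definition beta (r : nat) (mu : rat) : rat :=
  r%:R * (alpha mu)%:~R * (2 * mu - (alpha mu)%:~R + 2).

Definition mu0 (a b r : nat) : rat := (a + b)%:R / (2 * r%:R).

Definition mupp (a b r : nat) (l : int) : rat := mu0 a b r - (l + 1)%:~R / 2.

Definition theta (a b r : nat) (l : int) : rat :=
  beta r (mupp a b r l) + (l + 1)%:~R * (r + a)%:R.

From mathcomp Require Import all_boot all_order all_algebra.
From mathcomp Require Import lra zify ring.
Import Order.TTheory GRing.Theory Num.Theory.
Local Open Scope ring_scope.

(* Put [m := mu''_l], so that [mu''_(l-1) = m + 1/2] and [theta_(l-1) - theta_l]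
   is [beta_(r, m + 1/2) - beta_(r, m) - (r + a)].  Since [floor (m + 1/2)] is
   either [floor m] or [floor m + 1], this difference is [r floor m - a] or
   [r (2m - floor m) - a].  Both are positive because [2 r m = a + b - r(l + 1)]
   and [r floor((b - a)/r) <= b - a] give [r m >= a + r (q - l - 1)/2] with
   [q = floor((b - a)/r)]: in the first case [floor m > m - 1/2] and the excluded
   cases force [l <= q - 2]; in the second case [m - floor m >= 1/2].
   The argument works for every integer [l]. *)

Lemma floorD_lt1 {R : archiRealDomainType} (x y : R) : 0 <= y < 1 ->
  Num.floor (x + y) = Num.floor x \/ Num.floor (x + y) = Num.floor x + 1.
Proof.
case/andP=> y_ge0 y_lt1.
have lower : Num.floor x <= Num.floor (x + y).
  by rewrite floor_ge_int (le_trans (floor_le x)) ?lerDl.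
have upper : Num.floor (x + y) < Num.floor x + 2.
  rewrite floor_lt_int -[2]/(1 + 1)%Z addrA intrD.
  by rewrite ltr_leD ?floorD1_gt // ltW.
lia.
Qed.

Lemma betaE (r : nat) (x : rat) : beta r x =
  r%:R * ((Num.floor x)%:~R + 1) * (2 * x - (Num.floor x)%:~R + 1).
Proof. by rewrite /beta /alpha intrD; ring. Qed.

Lemma betaDhalf_floor_eq (r : nat) (x : rat) :
  Num.floor (x + 2^-1) = Num.floor x ->
  beta r (x + 2^-1) - beta r x = r%:R * ((Num.floor x)%:~R + 1).
Proof. by move=> eq_floor; rewrite !betaE eq_floor; field. Qed.

Lemma betaDhalf_floor_succ (r : nat) (x : rat) :
  Num.floor (x + 2^-1) = Num.floor x + 1 ->
  beta r (x + 2^-1) - beta r x = r%:R * (2 * x + 1 - (Num.floor x)%:~R).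
Proof. by move=> eq_floor; rewrite !betaE eq_floor intrD; field. Qed.

Lemma mupp_pred (a b r : nat) (l : int) :
  mupp a b r (l - 1) = mupp a b r l + 2^-1.
Proof. by rewrite /mupp subrK intrD; field. Qed.

Lemma theta_pred_sub (a b r : nat) (l : int) :
  theta a b r (l - 1) - theta a b r l =
  beta r (mupp a b r l + 2^-1) - beta r (mupp a b r l) - (r + a)%:R.
Proof. by rewrite /theta mupp_pred subrK intrD; ring. Qed.

Lemma mupp_ge (a b r : nat) (l : int) : (a <= b)%N -> (0 < r)%N ->
  2 * a%:R + r%:R * (((b - a) %/ r)%N%:Z - l - 1)%:~R <= 2 * r%:R * mupp a b r l.
Proof.
move=> le_ab r_gt0.
have r_neq0 : r%:R != 0 :> rat by rewrite pnatr_eq0 -lt0n.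
have mul_div_le : ((b - a) %/ r)%N%:R * r%:R <= b%:R - a%:R :> rat.
  by rewrite -natrM -natrB // ler_nat leq_divM.
have -> : 2 * r%:R * mupp a b r l = a%:R + b%:R - r%:R * (l%:~R + 1).
  by rewrite /mupp /mu0 intrD natrD; field.
rewrite !intrB -pmulrn; lra.
Qed.

Theorem proposition3p8 (a b r : nat) (l : int) :
  (a <= b)%N -> (0 < r)%N ->
  0 <= l -> l <= ((b - a) %/ r)%N%:Z ->
  ~ (l = ((b - a) %/ r)%N%:Z) ->
  ~ (l = ((b - a) %/ r)%N%:Z - 1 /\
     Num.floor (mupp a b r (l - 1)) = Num.floor (mupp a b r l)) ->
  theta a b r l < theta a b r (l - 1).
Proof.
move=> le_ab r_gt0 _ l_le_q l_neq_q not_exceptional.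
have r_pos : 0 < r%:R :> rat by rewrite ltr0n.
have lb := mupp_ge _ _ _ l le_ab r_gt0.
rewrite -subr_gt0 theta_pred_sub natrD.
set q := ((b - a) %/ r)%N in l_le_q l_neq_q not_exceptional lb.
set m := mupp a b r l in not_exceptional lb *.
have [floor_eq | floor_succ] := floorD_lt1 m (2^-1) isT.
- have l_le : 1 <= (q%:Z - l - 1)%:~R :> rat.
    rewrite ler1z; suff : l != q%:Z - 1 by lia.
    by apply/eqP=> l_eq; apply: not_exceptional; rewrite mupp_pred.
  have m_lt : m + 2^-1 < (Num.floor m)%:~R + 1.
    by rewrite -floor_eq -[1]/(1%:~R) -intrD floorD1_gt.
  rewrite betaDhalf_floor_eq //.
  have : r%:R * 1 <= r%:R * (q%:Z - l - 1)%:~R :> rat by rewrite ler_pM2l.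
  have : 0 < r%:R * ((Num.floor m)%:~R + 1 - (m + 2^-1)) :> rat.
    by rewrite mulr_gt0 // subr_gt0.
  nra.
- have l_le : 0 <= (q%:Z - l - 1)%:~R :> rat by rewrite ler0z; lia.
  have m_ge : (Num.floor m)%:~R + 1 <= m + 2^-1.
    by rewrite -[1]/(1%:~R) -intrD -floor_succ floor_le.
  rewrite betaDhalf_floor_succ //.
  have : 0 <= r%:R * (q%:Z - l - 1)%:~R :> rat by rewrite mulr_ge0 // ltW.
  have : 0 < r%:R * (m - (Num.floor m)%:~R) :> rat by rewrite mulr_gt0 // subr_gt0; lra.
  nra.
Qed.
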